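(* For all parameters $a,b,a',b'$ and indeterminates $x_i,x_j$, \[ R_{12}(x_i,x_j)\,T_1(x_i;a,b)\,T_2(x_j;a',b')=T_2(x_j;a',b')\,T_1(x_i;a,b)\,R_{12}(x_i,x_j), \] where $R(x_i,x_j)$ is the matrix $R(\omega)$ with weights $\omega_1=bx_i+a'x_j$, $\omega_2=ax_i+b'x_j$, $\omega_3=-ax_i+a'x_j$, $\omega_4=bx_i-b'x_j$, $\omega_5=(a'+b')x_j$, $\omega_6=(a+b)x_i$.
   Context: Let $V=\mathbb{C}v_0\oplus\mathbb{C}v_1$ with matrix units $e_{ab}$ ($e_{ab}v_c=\delta_{bc}v_a$). For weights $\omega=(\omega_1,\dots,\omega_6)$ put $R(\omega)=e_{00}\otimes(\omega_1e_{00}+\omega_3e_{11})+e_{01}\otimes\omega_5e_{10}+e_{10}\otimes\omega_6e_{01}+e_{11}\otimes(\omega_4e_{00}+\omega_2e_{11})\in\operatorname{End}(V\otimes V)$. For the quantum space $V^{\otimes n}$ and an auxiliary space $V_s$ ($s=1,2$, copies of $V$), $T_s(x;a,b)=R_{sn}(\omega)\cdots R_{s1}(\omega)\in\operatorname{End}(V_s\otimes V^{\otimes n})$ with $\omega_1=\omega_3=\omega_5=1$, $\omega_2=ax$, $\omega_4=bx$, $\omega_6=(a+b)x$; $R_{sj}$ acts as $R$ on $V_s$ and the $j$-th factor of $V^{\otimes n}$, and $R_{12}$ acts as $R$ on $V_1\otimes V_2$. The identity is in $\operatorname{End}(V_1\otimes V_2\otimes V^{\otimes n})$. *)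

From HB Require Import structures.
From mathcomp Require Import all_boot all_order all_algebra.
Set Implicit Arguments. Unset Strict Implicit. Unset Printing Implicit Defensive.
Import GRing.Theory.
Local Open Scope ring_scope.

(* V = C v0 (+) C v1; basis vector v_c is indexed by c : bool (false = 0, true = 1).
   The total space V_1 (x) V_2 (x) V^{(x) n} has basis indexed by
   Idx n := {ffun 'I_(n.+2) -> bool}: position 0 is V_1, position 1 is V_2,
   position j.+2 (j < n) is the (j+1)-th tensor factor of V^{(x) n}.
   Operators are given by their matrix entries  A s t  (row s, column t). *)

Section Ops.
Variable R : comNzRingType.

Definition Idx (n : nat) := {ffun 'I_(n.+2) -> bool}.

Definition Op (n : nat) := Idx n -> Idx n -> R.

Definition mulOp n (A B : Op n) : Op n := fun s t => \sum_(u : Idx n) A s u * B u t.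

Definition idOp n : Op n := fun s t => (s == t)%:R.

(* local operators on V (x) V, entries indexed by (row1,row2) (col1,col2) *)
Definition Loc := bool -> bool -> bool -> bool -> R.

Definition eu (a b : bool) : bool -> bool -> R := fun r c => ((r == a) && (c == b))%:R.

Definition tens (A B : bool -> bool -> R) : Loc :=
  fun r1 r2 c1 c2 => A r1 c1 * B r2 c2.

Definition addLoc (A B : Loc) : Loc := fun r1 r2 c1 c2 => A r1 r2 c1 c2 + B r1 r2 c1 c2.
Definition addV (A B : bool -> bool -> R) : bool -> bool -> R := fun r c => A r c + B r c.
Definition sclV (w : R) (A : bool -> bool -> R) : bool -> bool -> R := fun r c => w * A r c.

Definition Rmat (w1 w2 w3 w4 w5 w6 : R) : Loc :=
  addLoc (tens (eu false false) (addV (sclV w1 (eu false false)) (sclV w3 (eu true true))))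
 (addLoc (tens (eu false true) (sclV w5 (eu true false)))
 (addLoc (tens (eu true false) (sclV w6 (eu false true)))
         (tens (eu true true) (addV (sclV w4 (eu false false)) (sclV w2 (eu true true)))))).

Definition embed n (p q : 'I_(n.+2)) (L : Loc) : Op n :=
  fun s t => L (s p) (s q) (t p) (t q) *
             [forall k : 'I_(n.+2), (k != p) && (k != q) ==> (s k == t k)]%:R.

Definition aux1 n : 'I_(n.+2) := inord 0.
Definition aux2 n : 'I_(n.+2) := inord 1.
(* the j-th quantum site, j = 1..n *)
Definition site n (j : nat) : 'I_(n.+2) := inord j.+1.

(* T_s(x;a,b) = R_{sn}(w) ... R_{s1}(w), w1=w3=w5=1, w2=ax, w4=bx, w6=(a+b)x *)
Definition Tmon n (s : 'I_(n.+2)) (x a b : R) : Op n :=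
  foldr (fun j acc => mulOp (embed s (site n j) (Rmat 1 (a * x) 1 (b * x) 1 ((a + b) * x))) acc)
        (@idOp n) (rev (iota 1 n)).

Definition R12 n (xi xj a b a' b' : R) : Op n :=
  embed (aux1 n) (aux2 n)
    (Rmat (b * xi + a' * xj) (a * xi + b' * xj) (- (a * xi) + a' * xj)
          (b * xi - b' * xj) ((a' + b') * xj) ((a + b) * xi)).
End Ops.

From HB Require Import structures.
From mathcomp Require Import all_boot all_order all_algebra.
From mathcomp Require Import ring zify.
From Stdlib Require Import FunctionalExtensionality.
Set Implicit Arguments. Unset Strict Implicit. Unset Printing Implicit Defensive.
Import GRing.Theory.
Local Open Scope ring_scope.

(* Both monodromies are ordered products of local operators,
   T_s = L_{sn} ... L_{s1}, where L_{sj} acts on V_s and the j-th quantum site.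
   Two local facts suffice.  On V_1 (x) V_2 (x) V_j the RLL relation
   R_12 L_1j L_2j = L_2j L_1j R_12 holds; it is an identity between 8 x 8
   matrices, checked entrywise.  For k <> j, L_1k and L_2j act on disjoint
   tensor factors and hence commute.  Then R_12 is carried through the two
   products one site at a time (the train argument). *)

Section OperatorAlgebra.
Variables (R : comNzRingType) (n : nat).
Implicit Types (A B C : Op R n) (L M : Loc R).

Lemma op_ext A B : (forall s t, A s t = B s t) -> A = B.
Proof. by move=> eqAB; do 2 apply: functional_extensionality => ?; apply: eqAB. Qed.

Lemma mulOpA A B C : mulOp (mulOp A B) C = mulOp A (mulOp B C).
Proof.
apply: op_ext => s t; rewrite /mulOp.
under eq_bigr do rewrite big_distrl.
under [RHS]eq_bigr do rewrite big_distrr.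
by rewrite exchange_big; apply: eq_bigr => u _; apply: eq_bigr => v _; exact: esym (mulrA _ _ _).
Qed.

Lemma mul1Op A : mulOp (@idOp R n) A = A.
Proof.
apply: op_ext => s t; rewrite /mulOp /idOp (bigD1 s) //= eqxx mul1r big1 ?addr0 // => u.
by rewrite eq_sym => /negbTE ->; rewrite mul0r.
Qed.

Lemma mulOp1 A : mulOp A (@idOp R n) = A.
Proof.
apply: op_ext => s t; rewrite /mulOp /idOp (bigD1 t) //= eqxx mulr1 big1 ?addr0 // => u.
by move=> /negbTE ->; rewrite mulr0.
Qed.

Definition prodOp (F : nat -> Op R n) (l : seq nat) : Op R n :=
  foldr (fun j acc => mulOp (F j) acc) (@idOp R n) l.

Section DisjointSupports.
Variables (p q p' q' : 'I_n.+2).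
Hypothesis disjoint_pq_pq' : [&& p != p', p != q', q != p' & q != q'].

Definition outside_supports (s t : Idx n) :=
  [forall k, (k \notin [:: p; q; p'; q']) ==> (s k == t k)].

(* The only intermediate state contributing to the product takes the target
   values on {p, q} and the source values elsewhere. *)
Lemma mulOp_embed_disjoint L M s t :
  mulOp (embed p q L) (embed p' q' M) s t =
  L (s p) (s q) (t p) (t q) * M (s p') (s q') (t p') (t q') *
  (outside_supports s t)%:R.
Proof.
move: disjoint_pq_pq' => /and4P[pp' pq' qp' qq'].
pose u0 : Idx n := [ffun k => if k \in [:: p; q] then t k else s k].
have u0_pq k : k \in [:: p; q] -> u0 k = t k by rewrite ffunE => ->.
have u0_out k : k \notin [:: p; q] -> u0 k = s k by rewrite ffunE => /negbTE ->.
have p'_out : p' \notin [:: p; q] by rewrite !inE !negb_or ![p' == _]eq_sym pp' qp'.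
have q'_out : q' \notin [:: p; q] by rewrite !inE !negb_or ![q' == _]eq_sym pq' qq'.
rewrite /mulOp /embed (bigD1 u0) //= big1 ?addr0 => [|u u_neq_u0]; last first.
  case: forallP => [s_u|]; last by rewrite mulr0 mul0r.
  case: forallP => [u_t|]; last by rewrite !mulr0.
  case/eqP: u_neq_u0; apply/ffunP => k; rewrite ffunE.
  case: ifP => k_pq; last first.
    by apply/esym/eqP/(implyP (s_u k)); move/negbT: k_pq; rewrite !inE negb_or.
  apply/eqP/(implyP (u_t k)); move: k_pq; rewrite !inE.
  by case/orP=> /eqP->; rewrite ?pp' ?pq' ?qp' ?qq'.
rewrite (u0_out p') // (u0_out q') // (u0_pq p) ?(u0_pq q) // ?inE ?eqxx ?orbT //.
have -> : [forall k, (k != p) && (k != q) ==> (s k == u0 k)].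
  by apply/forallP => k; apply/implyP => k_out; rewrite u0_out // !inE negb_or.
have -> : [forall k, (k != p') && (k != q') ==> (u0 k == t k)] = outside_supports s t.
  apply: eq_forallb => k; rewrite !inE !negb_or.
  case: (boolP (k \in [:: p; q])) => k_pq; last first.
    by rewrite u0_out //; move: k_pq; rewrite !inE negb_or => /andP[-> ->].
  rewrite u0_pq // eqxx implybT; move: k_pq; rewrite !inE.
  by case/orP=> /eqP->; rewrite eqxx ?andbF.
by rewrite mulr1 -mulrA [_ * (_ * _)]mulrCA mulrA.
Qed.

End DisjointSupports.

Lemma embed_comm (p q p' q' : 'I_n.+2) L M : [&& p != p', p != q', q != p' & q != q'] ->
  mulOp (embed p q L) (embed p' q' M) = mulOp (embed p' q' M) (embed p q L).
Proof.
move=> disj; have /and4P[pp' pq' qp' qq'] := disj.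
have disj' : [&& p' != p, p' != q, q' != p & q' != q].
  by rewrite ![p' == _]eq_sym ![q' == _]eq_sym pp' pq' qp' qq'.
have supports_sym s t : outside_supports p q p' q' s t = outside_supports p' q' p q s t.
  by apply: eq_forallb => k; rewrite -(mem_rot 2).
apply: op_ext => s t.
by rewrite !mulOp_embed_disjoint // supports_sym [M _ _ _ _ * _]mulrC.
Qed.

End OperatorAlgebra.

Section RMatrix.
Variable R : comNzRingType.

Definition Rentry (w1 w2 w3 w4 w5 w6 : R) : Loc R := fun r1 r2 c1 c2 =>
  match r1, r2, c1, c2 with
  | false, false, false, false => w1
  | false, true, false, true => w3
  | false, true, true, false => w5
  | true, false, false, true => w6
  | true, false, true, false => w4
  | true, true, true, true => w2
  | _, _, _, _ => 0
  end.

Lemma RmatE w1 w2 w3 w4 w5 w6 : Rmat w1 w2 w3 w4 w5 w6 = Rentry w1 w2 w3 w4 w5 w6.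
Proof.
apply: functional_extensionality => r1; apply: functional_extensionality => r2.
apply: functional_extensionality => c1; apply: functional_extensionality => c2.
by case: r1; case: r2; case: c1; case: c2; rewrite /Rmat /addLoc /tens /addV /sclV /eu /=; ring.
Qed.

Definition Lmat (x a b : R) : Loc R := Rmat 1 (a * x) 1 (b * x) 1 ((a + b) * x).

Definition R12mat (xi xj a b a' b' : R) : Loc R :=
  Rmat (b * xi + a' * xj) (a * xi + b' * xj) (- (a * xi) + a' * xj)
       (b * xi - b' * xj) ((a' + b') * xj) ((a + b) * xi).

End RMatrix.

Section Localisation.
Variables (R : comNzRingType) (n m : nat) (f : 'I_m -> 'I_n.+2).
Hypothesis f_inj : injective f.

Definition SubIdx := {ffun 'I_m -> bool}.
Definition SubOp := SubIdx -> SubIdx -> R.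
Implicit Types (s t : Idx n) (u v w : SubIdx) (K G : SubOp).

Definition restrict s : SubIdx := [ffun i => s (f i)].

Definition agree_off s t := [forall k, [forall i, f i != k] ==> (s k == t k)].

Definition embedSub K : Op R n :=
  fun s t => K (restrict s) (restrict t) * (agree_off s t)%:R.

Definition mulSub K G : SubOp := fun u w => \sum_v K u v * G v w.

Definition patch s v : Idx n :=
  [ffun k => if [pick i | f i == k] is Some i then v i else s k].

Lemma restrict_patch s v : restrict (patch s v) = v.
Proof.
apply/ffunP => i; rewrite !ffunE.
by case: pickP => [j /eqP /f_inj -> //|/(_ i)]; rewrite eqxx.
Qed.

Lemma agree_off_patchl s v t : agree_off (patch s v) t = agree_off s t.
Proof.
apply/eq_forallb => k; rewrite ffunE.
case: pickP => [j /eqP <-|//].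
suff -> : [forall i, f i != f j] = false by [].
by apply/negbTE/forallPn; exists j; rewrite negbK.
Qed.

Lemma agree_off_patch s v : agree_off s (patch s v).
Proof.
apply/forallP => k; apply/implyP => /forallP off_k; rewrite ffunE.
by case: pickP => [j /eqP fj_k|//]; have := off_k j; rewrite fj_k eqxx.
Qed.

Lemma patch_restrict s t : agree_off s t -> patch s (restrict t) = t.
Proof.
move=> /forallP agree_st; apply/ffunP => k; rewrite !ffunE.
case: pickP => [j /eqP <-|not_img]; first by rewrite ffunE.
by apply/eqP/(implyP (agree_st k)); apply/forallP => i; rewrite not_img.
Qed.

(* Intermediate states agreeing with [s] off the image of [f] are exactly
   the patches of [s]. *)
Lemma mulOp_embedSub K G : mulOp (embedSub K) (embedSub G) = embedSub (mulSub K G).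
Proof.
apply: op_ext => s t; rewrite /mulOp /embedSub /mulSub big_distrl /=.
rewrite (bigID (agree_off s)) /= [X in _ + X]big1 ?addr0; last first.
  by move=> u /negbTE ->; rewrite mulr0 mul0r.
rewrite (reindex (patch s)) /=; last first.
  exists restrict => [v _|u]; first by rewrite restrict_patch.
  by rewrite inE => /patch_restrict.
rewrite (eq_bigl predT) => [|v]; last by rewrite agree_off_patch.
apply: eq_bigr => v _.
by rewrite restrict_patch agree_off_patchl agree_off_patch mulr1 mulrA.
Qed.

Definition pairSub (i j : 'I_m) (L : Loc R) : SubOp := fun u w =>
  L (u i) (u j) (w i) (w j) * [forall k, (k != i) && (k != j) ==> (u k == w k)]%:R.

Lemma embed_pairSub i j L : embed (f i) (f j) L = embedSub (pairSub i j L).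
Proof.
apply: op_ext => s t; rewrite /embed /embedSub /pairSub !ffunE -mulrA -natrM mulnb.
congr (_ * (nat_of_bool _)%:R); apply/idP/idP => [/forallP eq_off|].
  apply/andP; split; apply/forallP => k.
    apply/implyP => /andP[k_i k_j]; rewrite !ffunE.
    by apply: (implyP (eq_off (f k))); rewrite !(inj_eq f_inj) k_i k_j.
  apply/implyP => /forallP not_img; apply: (implyP (eq_off k)).
  by rewrite eq_sym (not_img i) eq_sym (not_img j).
case/andP=> /forallP eq_sub /forallP agree_st; apply/forallP => k.
apply/implyP => /andP[k_fi k_fj].
case: (pickP (fun i => f i == k)) => [l /eqP fl_k|not_img].
  move: (eq_sub l); rewrite -fl_k !(inj_eq f_inj) in k_fi k_fj *.
  by rewrite k_fi k_fj !ffunE.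
by apply: (implyP (agree_st k)); apply/forallP => l; rewrite not_img.
Qed.

End Localisation.

Section ThreeSites.
Variable R : comNzRingType.

Definition o0 : 'I_3 := @Ordinal 3 0 isT.
Definition o1 : 'I_3 := @Ordinal 3 1 isT.
Definition o2 : 'I_3 := @Ordinal 3 2 isT.

Definition sub3 (x y z : bool) : SubIdx 3 :=
  [ffun i : 'I_3 => match val i with 0 => x | 1 => y | _ => z end].

Lemma sub3_eta (u : SubIdx 3) : u = sub3 (u o0) (u o1) (u o2).
Proof.
by apply/ffunP => -[[|[|[|i]]] lt_i3]; rewrite ffunE //=; congr (u _); apply: val_inj.
Qed.

Lemma sum_sub3 (F : SubIdx 3 -> R) :
  \sum_u F u = \sum_x \sum_y \sum_z F (sub3 x y z).
Proof.
rewrite (reindex (fun p : bool * (bool * bool) => sub3 p.1 p.2.1 p.2.2)) /=; last first.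
  exists (fun u => (u o0, (u o1, u o2))) => [[x [y z]] _|u _] /=.
    by rewrite !ffunE.
  by rewrite -sub3_eta.
by under [RHS]eq_bigr do rewrite pair_bigA; rewrite pair_bigA.
Qed.

Lemma forall_ord3 (P : pred 'I_3) : [forall i, P i] = [&& P o0, P o1 & P o2].
Proof.
apply/forallP/and3P => [P_all|[P0 P1 P2] [[|[|[|//]]] lt_i3]].
- by split; apply: P_all.
- by rewrite (_ : Ordinal lt_i3 = o0) //; apply: val_inj.
- by rewrite (_ : Ordinal lt_i3 = o1) //; apply: val_inj.
- by rewrite (_ : Ordinal lt_i3 = o2) //; apply: val_inj.
Qed.

Lemma mulSub_sub3 (K G : SubOp R 3) u w :
  mulSub K G u w = \sum_x \sum_y \sum_z K u (sub3 x y z) * G (sub3 x y z) w.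
Proof. exact: sum_sub3. Qed.

Lemma pairSub01_sub3 (L : Loc R) x y z x' y' z' :
  pairSub o0 o1 L (sub3 x y z) (sub3 x' y' z') = L x y x' y' * (z == z')%:R.
Proof. by rewrite /pairSub forall_ord3 !ffunE /= ?andbT. Qed.

Lemma pairSub02_sub3 (L : Loc R) x y z x' y' z' :
  pairSub o0 o2 L (sub3 x y z) (sub3 x' y' z') = L x z x' z' * (y == y')%:R.
Proof. by rewrite /pairSub forall_ord3 !ffunE /= ?andbT. Qed.

Lemma pairSub12_sub3 (L : Loc R) x y z x' y' z' :
  pairSub o1 o2 L (sub3 x y z) (sub3 x' y' z') = L y z y' z' * (x == x')%:R.
Proof. by rewrite /pairSub forall_ord3 !ffunE /= ?andbT. Qed.

Variables (a b a' b' xi xj : R).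

Lemma RLL_sub3 :
  mulSub (mulSub (pairSub o0 o1 (R12mat xi xj a b a' b')) (pairSub o0 o2 (Lmat xi a b)))
         (pairSub o1 o2 (Lmat xj a' b')) =
  mulSub (mulSub (pairSub o1 o2 (Lmat xj a' b')) (pairSub o0 o2 (Lmat xi a b)))
         (pairSub o0 o1 (R12mat xi xj a b a' b')).
Proof.
apply: functional_extensionality => u; apply: functional_extensionality => w.
rewrite (sub3_eta u) (sub3_eta w).
move: (u o0) (u o1) (u o2) (w o0) (w o1) (w o2) => x y z x' y' z'.
rewrite ![mulSub (mulSub _ _) _ _ _]mulSub_sub3 !big_bool !mulSub_sub3 !big_bool.
rewrite !pairSub01_sub3 !pairSub02_sub3 !pairSub12_sub3 /R12mat /Lmat !RmatE.
by case: x; case: y; case: z; case: x'; case: y'; case: z' => /=; ring.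
Qed.
End ThreeSites.

Section RLLEmbedded.
Variables (R : comNzRingType) (n : nat) (a b a' b' xi xj : R).

Lemma RLL_embed (p q r : 'I_n.+2) : uniq [:: p; q; r] ->
  mulOp (mulOp (embed p q (R12mat xi xj a b a' b')) (embed p r (Lmat xi a b)))
        (embed q r (Lmat xj a' b')) =
  mulOp (mulOp (embed q r (Lmat xj a' b')) (embed p r (Lmat xi a b)))
        (embed p q (R12mat xi xj a b a' b')).
Proof.
move=> uniq_pqr; pose t := [tuple p; q; r].
have /tuple_uniqP t_inj : uniq t by [].
have embed_t := embed_pairSub (R:=R) t_inj.
rewrite (embed_t o0 o1) (embed_t o0 o2) (embed_t o1 o2).
by rewrite !mulOp_embedSub // RLL_sub3.
Qed.

End RLLEmbedded.

Section Train.
Variables (R : comNzRingType) (n : nat) (Rop : Op R n) (L1 L2 : nat -> Op R n).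
Variable P : pred nat.
Hypothesis RLL : forall j, P j ->
  mulOp (mulOp Rop (L1 j)) (L2 j) = mulOp (mulOp (L2 j) (L1 j)) Rop.
Hypothesis L1L2_comm : forall k j, P k -> P j -> k != j ->
  mulOp (L1 k) (L2 j) = mulOp (L2 j) (L1 k).

Lemma prodOp_L1_comm l j : all P l -> P j -> j \notin l ->
  mulOp (prodOp L1 l) (L2 j) = mulOp (L2 j) (prodOp L1 l).
Proof.
elim: l => [|k l IHl] /=; first by rewrite mul1Op mulOp1.
case/andP=> Pk Pl Pj; rewrite inE negb_or => /andP[j_neq_k j_notin_l].
by rewrite mulOpA IHl // -mulOpA L1L2_comm 1?eq_sym // mulOpA.
Qed.

Lemma prodOp_L2_comm l j : all P l -> P j -> j \notin l ->
  mulOp (L1 j) (prodOp L2 l) = mulOp (prodOp L2 l) (L1 j).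
Proof.
elim: l => [|k l IHl] /=; first by rewrite mul1Op mulOp1.
case/andP=> Pk Pl Pj; rewrite inE negb_or => /andP[j_neq_k j_notin_l].
by rewrite -mulOpA L1L2_comm // mulOpA IHl // mulOpA.
Qed.

Lemma prodOp_RLL l : all P l -> uniq l ->
  mulOp (mulOp Rop (prodOp L1 l)) (prodOp L2 l) =
  mulOp (mulOp (prodOp L2 l) (prodOp L1 l)) Rop.
Proof.
elim: l => [|j l IHl] /=; first by rewrite !mulOp1 mul1Op.
case/andP=> Pj Pl /andP[j_notin_l uniq_l].
transitivity (mulOp (mulOp (mulOp Rop (L1 j)) (L2 j)) (mulOp (prodOp L1 l) (prodOp L2 l))).
  by rewrite !mulOpA -(mulOpA (prodOp L1 l)) prodOp_L1_comm // !mulOpA.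
rewrite RLL //.
transitivity (mulOp (mulOp (L2 j) (L1 j)) (mulOp (mulOp Rop (prodOp L1 l)) (prodOp L2 l))).
  by rewrite !mulOpA.
by rewrite IHl // !mulOpA -(mulOpA (L1 j)) prodOp_L2_comm // !mulOpA.
Qed.

End Train.

Section Sites.
Variable n : nat.

Definition is_site (j : nat) := (0 < j <= n)%N.

Lemma val_aux1 : val (aux1 n) = 0%N. Proof. by rewrite /aux1 /= inordK. Qed.
Lemma val_aux2 : val (aux2 n) = 1%N. Proof. by rewrite /aux2 /= inordK. Qed.
Lemma val_site j : is_site j -> val (site n j) = j.+1.
Proof. by case/andP=> _ le_jn; rewrite /site /= inordK // ltnS. Qed.

Lemma uniq_aux_site j : is_site j -> uniq [:: aux1 n; aux2 n; site n j].
Proof.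
move=> sj; rewrite /= !inE -!val_eqE val_aux1 val_aux2 val_site //.
by move: sj; rewrite /is_site; lia.
Qed.

Lemma aux_site_disjoint k j : is_site k -> is_site j -> k != j ->
  [&& aux1 n != aux2 n, aux1 n != site n j, site n k != aux2 n & site n k != site n j].
Proof.
move=> sk sj; rewrite -!val_eqE val_aux1 val_aux2 !val_site //.
by move: sk sj; rewrite /is_site; lia.
Qed.

End Sites.

Theorem proposition4p15 (R : comNzRingType) (n : nat) (a b a' b' xi xj : R) :
  forall s t : Idx n,
    mulOp (mulOp (@R12 R n xi xj a b a' b') (@Tmon R n (aux1 n) xi a b))
          (@Tmon R n (aux2 n) xj a' b') s t
  = mulOp (mulOp (@Tmon R n (aux2 n) xj a' b') (@Tmon R n (aux1 n) xi a b))
          (@R12 R n xi xj a b a' b') s t.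
Proof.
move=> s t; congr (_ s t).
have sites_ok : all (is_site n) (rev (iota 1 n)).
  by rewrite all_rev; apply/allP => j; rewrite mem_iota /is_site; lia.
apply: (prodOp_RLL (P := is_site n)) sites_ok _.
- by move=> j /uniq_aux_site; apply: RLL_embed.
- by move=> k j sk sj neq_kj; apply/embed_comm/aux_site_disjoint.
- by rewrite rev_uniq iota_uniq.
Qed.
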